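(* Let $N\ge1$, $k\in\mathbb{Z}$, $m\in\mathbb{Z}_{>0}$, $\Gamma\in\{\Gamma_0(N),\Gamma_1(N)\}$, and let $\psi\in J^N_{k,\frac mN}(\Gamma)$ be meromorphic with (at most) double poles at $z=z_s=\alpha\tau+\beta$ for $s=(\alpha,\beta)\in S(\psi)\subset\mathbb{Q}^2$. Then for all $\gamma=\begin{pmatrix}a&b\\c&d\end{pmatrix}\in\Gamma$: $E_s(\frac{a\tau+b}{c\tau+d})=(c\tau+d)^{k-2}E_{s\gamma}(\tau)$ and $D_s(\frac{a\tau+b}{c\tau+d})=(c\tau+d)^{k-1}D_{s\gamma}(\tau)$, where $s\gamma=(a\alpha+c\beta,b\alpha+d\beta)$.
   Context: $\mathbf{e}(t)=e^{2\pi it}$. $\Gamma_0(N)$: $c\equiv0\bmod N$; $\Gamma_1(N)$: also $a\equiv d\equiv1\bmod N$. $J^N_{k,\frac mN}(\Gamma)$: functions $\psi$ on $\mathbb{H}\times\mathbb{C}$ with $\psi(\frac{a\tau+b}{c\tau+d},\frac z{c\tau+d})=(c\tau+d)^k\mathbf{e}(\frac mN\frac{cz^2}{c\tau+d})\psi(\tau,z)$ for $\gamma\in\Gamma$ and $\psi(\tau,z+\lambda\tau+\mu)=\mathbf{e}(-\frac mN(\lambda^2\tau+2\lambda z+\lambda\mu))\psi(\tau,z)$ for $(\lambda,\mu)\in N\mathbb{Z}\times\mathbb{Z}$. The residues $D_s,E_s$ are defined by $\mathbf{e}(\frac mN\alpha z_s)\psi(\tau,z_s+\varepsilon)=\frac{E_s(\tau)}{(2\pi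 i\varepsilon)^2}+\frac{D_s(\tau)-2\frac mN\alpha E_s(\tau)}{2\pi i\varepsilon}+O(1)$ as $\varepsilon\to0$. *)

From HB Require Import structures.
From mathcomp Require Import all_boot all_order all_algebra.
From mathcomp Require Import complex.
From mathcomp Require Import all_classical all_reals all_analysis.
Import Order.TTheory GRing.Theory Num.Theory.
Import numFieldNormedType.Exports.
Set Implicit Arguments. Unset Strict Implicit. Unset Printing Implicit Defensive.
Local Open Scope ring_scope.

Section Defs.
Variable R : realType.
Local Notation C := (R[i]).

Definition Cexp (z : C) : C :=
  ((expR (complex.Re z)) +i* 0)%C * ((cos (complex.Im z)) +i* (sin (complex.Im z)))%C.

Definition imagI : C := (0 +i* 1)%C.
Definition twopii : C := 2 * (pi +i* 0)%C * imagI.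

Definition ee (t : C) : C := Cexp (twopii * t).

Definition upper (tau : C) : Prop := 0 < complex.Im tau.

Definition mobius (a b c d : int) (tau : C) : C :=
  (a%:~R * tau + b%:~R) / (c%:~R * tau + d%:~R).

Definition zs (s : rat * rat) (tau : C) : C := ratr s.1 * tau + ratr s.2.

Definition sact (s : rat * rat) (a b c d : int) : rat * rat :=
  (a%:~R * s.1 + c%:~R * s.2, b%:~R * s.1 + d%:~R * s.2).

Inductive congr_group := Gamma0 | Gamma1.

Definition in_Gamma (G : congr_group) (N : nat) (a b c d : int) : Prop :=
  a * d - b * c = 1 /\ (N%:Z %| c)%Z /\
  (G = Gamma1 -> (N%:Z %| a - 1)%Z /\ (N%:Z %| d - 1)%Z).

Definition is_pole (S : set (rat * rat)) (tau z : C) : Prop :=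
  exists2 s, S s & z = zs s tau.

Definition holo_off_poles (S : set (rat * rat)) (psi : C -> C -> C) : Prop :=
  (forall tau z, upper tau -> ~ is_pole S tau z ->
     derivable (fun w : C^o => (psi tau w : C^o)) z 1) /\
  (forall tau z, upper tau -> ~ is_pole S tau z ->
     derivable (fun t : C^o => (psi t z : C^o)) tau 1).

(* transformation laws of J^N_{k, m/N}(Gamma), as identities of meromorphic
   functions, i.e. holding wherever both sides are away from the poles *)
Definition jacobi_form (G : congr_group) (N : nat) (k : int) (m : nat)
  (S : set (rat * rat)) (psi : C -> C -> C) : Prop :=
  (forall a b c d : int, in_Gamma G N a b c d ->
   forall tau z, upper tau -> ~ is_pole S tau z ->
     ~ is_pole S (mobius a b c d tau) (z / (c%:~R * tau + d%:~R)) ->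
     psi (mobius a b c d tau) (z / (c%:~R * tau + d%:~R)) =
       (c%:~R * tau + d%:~R) ^ k *
       ee ((m%:R / N%:R) * (c%:~R * z ^+ 2 / (c%:~R * tau + d%:~R))) * psi tau z) /\
  (forall l mu : int, forall tau z, upper tau -> ~ is_pole S tau z ->
     ~ is_pole S tau (z + (N%:Z * l)%:~R * tau + mu%:~R) ->
     psi tau (z + (N%:Z * l)%:~R * tau + mu%:~R) =
       ee (- (m%:R / N%:R) * ((N%:Z * l)%:~R ^+ 2 * tau + 2 * (N%:Z * l)%:~R * z
                               + (N%:Z * l)%:~R * mu%:~R)) * psi tau z).

(* E, D are the residue data of psi:
   e(m/N alpha z_s) psi(tau, z_s + eps)
     = E_s(tau)/(2 pi i eps)^2 + (D_s(tau) - 2 m/N alpha E_s(tau))/(2 pi i eps) + O(1)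
   as eps -> 0, for every s = (alpha, beta) in Q^2 and tau in H. *)
Definition residue_data (N : nat) (m : nat) (psi : C -> C -> C)
  (E D : rat * rat -> C -> C) : Prop :=
  forall (s : rat * rat) (tau : C), upper tau ->
  exists M delta : C, 0 < delta /\
    forall eps : C, 0 < `|eps| < delta ->
      `| ee ((m%:R / N%:R) * ratr s.1 * zs s tau) * psi tau (zs s tau + eps)
         - E s tau / (twopii * eps) ^+ 2
         - (D s tau - 2 * (m%:R / N%:R) * ratr s.1 * E s tau) / (twopii * eps) | <= M.

End Defs.

(* Put j = c tau + d, w = gamma tau, and u = z_{s gamma}(tau), so that z_s(w) = u / j.
   The transformation law of psi under gamma, evaluated at z = u + j eps, reads
     e(m/N alpha z_s(w)) psi(w, z_s(w) + eps)
       = j^k e(lambda eps + m/N c j eps^2) e(m/N alpha' u) psi(tau, u + j eps)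
   with lambda = 2 m/N c u and alpha' the first coordinate of s gamma.  The residue
   data at (s, w) and at (s gamma, tau) expand both sides as
   A / (2 pi i eps)^2 + B / (2 pi i eps) + O(1), while the exponential factor is
   1 + 2 pi i lambda eps + O(eps^2); comparing the coefficients of eps^-2 and eps^-1
   gives the two identities.  The expansions are compared along the points eps for
   which j eps is a small irrational real number, where neither side of the
   transformation law sits on a pole. *)

From mathcomp Require Import all_boot all_order all_algebra.
From mathcomp Require Import complex.
From mathcomp Require Import all_classical all_reals all_analysis.
From mathcomp Require Import ring lra.
Import Order.TTheory GRing.Theory Num.Theory.
Import numFieldNormedType.Exports.
Import Normc.
Set Implicit Arguments. Unset Strict Implicit. Unset Printing Implicit Defensive.
Local Open Scope ring_scope.

Section real_estimates.
Variable R : realType.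

Lemma mvt_norm_le (f df : R -> R) (y K : R) :
  (forall x : R, is_derive x (1 : R) f (df x)) ->
  (forall x, `|x| <= `|y| -> `|df x| <= K) -> `|f y - f 0| <= K * `|y|.
Proof.
move=> f_df df_le; have f_cont : continuous f.
  by move=> x; exact/differentiable_continuous/derivable1_diffP/ex_derive.
have [y0|y0|->] := ltgtP y 0; last by rewrite subrr !normr0 mulr0.
- have [x] := MVT y0 (fun x _ => f_df x) (continuous_subspaceT f_cont).
  rewrite in_itv/= => /andP[yx x0] f_eq.
  by rewrite distrC f_eq normrM sub0r normrN ler_wpM2r// df_le// !ltr0_norm// lerN2 ltW.
- have [x] := MVT y0 (fun x _ => f_df x) (continuous_subspaceT f_cont).
  rewrite in_itv/= => /andP[x0 xy] f_eq.
  by rewrite f_eq normrM subr0 ler_wpM2r// df_le// !gtr0_norm// ltW.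
Qed.

Lemma norm_sin_le (y : R) : `|sin y| <= `|y|.
Proof.
have := @mvt_norm_le sin cos y 1 (@is_derive_sin R) (fun x _ => cos_max x).
by rewrite sin0 subr0 mul1r.
Qed.

Lemma norm_cos_sub1_le (y : R) : `|cos y - 1| <= `|y| ^+ 2.
Proof.
have := @mvt_norm_le cos (fun x => - sin x) y `|y| (@is_derive_cos R).
rewrite cos0 expr2; apply=> x xy; rewrite normrN.
exact: le_trans (norm_sin_le x) xy.
Qed.

Lemma norm_sin_sub_le (y : R) : `|sin y - y| <= `|y| ^+ 3.
Proof.
have := @mvt_norm_le (sin - id)%R (fun x => cos x - 1) y (`|y| ^+ 2)
  (fun x => is_deriveB (is_derive_sin x) (is_derive_id x 1)).
rewrite !fctE sin0 subr0 subr0 [`|y| ^+ 3]exprSr; apply=> x xy.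
apply: le_trans (norm_cos_sub1_le x) _.
by rewrite lerXn2r ?nnegrE.
Qed.

Lemma norm_expR_sub_1D_le (x : R) : `|x| <= 1/2 -> `|expR x - 1 - x| <= 2 * x ^+ 2.
Proof.
rewrite ler_norml => /andP[xge xle].
have := expR_ge1Dx x; have := expR_ge1Dx (- x).
have := expRxMexpNx_1 x; have := expR_gt0 x.
move=> ? ? ? ?; rewrite ger0_norm; [nra | lra].
Qed.

Lemma expR_cos_sub_1D_le (a b r : R) : `|a| <= r -> `|b| <= r -> r <= 1/2 ->
  `|expR a * cos b - 1 - a| <= 4 * r ^+ 2.
Proof.
move=> ar br r_le.
have -> : expR a * cos b - 1 - a =
    (expR a - 1 - a) * cos b + (1 + a) * (cos b - 1) by ring.
apply: le_trans (ler_normD _ _) _; rewrite !normrM.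
have := norm_expR_sub_1D_le (le_trans ar r_le).
have := cos_max b; have := norm_cos_sub1_le b; have := ler_normD 1 a.
rewrite normr1 -[a ^+ 2]real_normK ?num_real //.
have := normr_ge0 a; have := normr_ge0 b; have := normr_ge0 (cos b - 1).
have := normr_ge0 (expR a - 1 - a); have := normr_ge0 (cos b).
nra.
Qed.

Lemma expR_sin_sub_le (a b r : R) : `|a| <= r -> `|b| <= r -> r <= 1/2 ->
  `|expR a * sin b - b| <= 4 * r ^+ 2.
Proof.
move=> ar br r_le.
have -> : expR a * sin b - b = ((expR a - 1 - a) + a) * sin b + (sin b - b) by ring.
apply: le_trans (ler_normD _ _) _; rewrite normrM.
have := norm_expR_sub_1D_le (le_trans ar r_le).
have := norm_sin_le b; have := norm_sin_sub_le b; have := ler_normD (expR a - 1 - a) a.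
rewrite -[a ^+ 2]real_normK ?num_real //.
have := normr_ge0 a; have := normr_ge0 b; have := normr_ge0 (sin b).
have := normr_ge0 (expR a - 1 - a).
nra.
Qed.

End real_estimates.

Section complex_norm.
Variable R : realType.
Local Notation C := R[i].
Implicit Types x y z : C.

Lemma normcE x : `|x| = (normc x)%:C%C.
Proof. by case: x. Qed.

Lemma normc_ge0 x : 0 <= normc x.
Proof. by case: x => a b; exact: sqrtr_ge0. Qed.

Lemma normc_eq0 x : (normc x == 0) = (x == 0).
Proof.
by rewrite -[x == 0]normr_eq0 normcE -(rmorph0 (real_complex R)) (inj_eq (@complexI R)).
Qed.

Lemma normc_gt0 x : (0 < normc x) = (x != 0).
Proof. by rewrite lt_def normc_eq0 normc_ge0 andbT. Qed.

Lemma normcX x n : normc (x ^+ n) = normc x ^+ n.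
Proof. by apply: complexI; rewrite -normcE normrX normcE rmorphXn. Qed.

Lemma normc_Re_le x : `|complex.Re x| <= normc x.
Proof.
case: x => a b /=; rewrite -sqrtr_sqr ler_wsqrtr // lerDl; exact: sqr_ge0.
Qed.

Lemma normc_Im_le x : `|complex.Im x| <= normc x.
Proof.
case: x => a b /=; rewrite -sqrtr_sqr ler_wsqrtr // lerDr; exact: sqr_ge0.
Qed.

Lemma normc_le_ReIm x : normc x <= `|complex.Re x| + `|complex.Im x|.
Proof.
case: x => a b /=; rewrite -[X in _ <= X]ger0_norm ?addr_ge0 // -sqrtr_sqr.
rewrite ler_wsqrtr // -[a ^+ 2]real_normK ?num_real // -[b ^+ 2]real_normK ?num_real //.
have := normr_ge0 a; have := normr_ge0 b; nra.
Qed.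

Lemma ReIm_sqr_normc z : complex.Re z ^+ 2 + complex.Im z ^+ 2 = normc z ^+ 2.
Proof. by case: z => a b; rewrite /= sqr_sqrtr // addr_ge0 ?sqr_ge0. Qed.

Lemma normc_real (a : R) : normc a%:C%C = `|a|.
Proof. by rewrite /= expr0n addr0 sqrtr_sqr. Qed.

Lemma Im_div (p q : C) : complex.Im (p / q) =
  (complex.Im p * complex.Re q - complex.Re p * complex.Im q) / (normc q ^+ 2).
Proof. by rewrite -ReIm_sqr_normc; case: p => x y; case: q => u v /=; ring. Qed.

Lemma normc_le_Re x y : `|x| <= y -> normc x <= complex.Re y.
Proof. by rewrite normcE lecE => /andP[]. Qed.

Lemma normc_lt_Re x y : 0 < y -> normc x < complex.Re y -> `|x| < y.
Proof. by rewrite normcE !ltcE /= => /andP[/eqP-> _] ->; rewrite eqxx. Qed.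

End complex_norm.

Section complex_exponential.
Variable R : realType.
Local Notation C := R[i].

Lemma CexpE (a b : R) : Cexp (a +i* b)%C = ((expR a * cos b) +i* (expR a * sin b))%C.
Proof. by rewrite /Cexp /=; simpc. Qed.

Lemma CexpD (x y : C) : Cexp (x + y) = Cexp x * Cexp y.
Proof.
case: x => a b; case: y => c d; rewrite !CexpE /= expRD sinD cosD.
by apply/eqP; rewrite eq_complex /=; apply/andP; split; apply/eqP; ring.
Qed.

Lemma eeD (x y : C) : ee (x + y) = ee x * ee y.
Proof. by rewrite /ee mulrDr CexpD. Qed.

Lemma normc_Cexp_sub_1D_le (z : C) : normc z <= 1/2 ->
  normc (Cexp z - 1 - z) <= 8 * normc z ^+ 2.
Proof.
move=> z_le; have := normc_Re_le z; have := normc_Im_le z.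
case: z z_le => a b; set r := normc _ => z_le b_le a_le.
rewrite CexpE; apply: le_trans (normc_le_ReIm _) _; rewrite /= !subr0.
have := expR_cos_sub_1D_le a_le b_le z_le.
have := expR_sin_sub_le a_le b_le z_le.
lra.
Qed.

End complex_exponential.

Section laurent_expansion.
Variable R : realType.
Local Notation C := R[i].
Implicit Types (P : set C) (f g h : C -> C) (A B : C).

Definition bounded_near0 P h : Prop :=
  exists M : R, exists2 r : R, 0 < r &
    forall x, P x -> x != 0 -> normc x < r -> normc (h x) <= M.

Definition clusters_at0 P : Prop :=
  forall r : R, 0 < r -> exists x, [/\ P x, x != 0 & normc x < r].

Definition laurent2 P f A B : Prop :=
  bounded_near0 P (fun x => f x - A / x ^+ 2 - B / x).

Lemma eq_bounded_near0 P h1 h2 : (forall x, P x -> x != 0 -> h1 x = h2 x) ->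
  bounded_near0 P h1 -> bounded_near0 P h2.
Proof.
by move=> h12 [M [r r0 h1_le]]; exists M; exists r => // x Px x0 xr; rewrite -h12 // h1_le.
Qed.

Lemma bounded_near0_cst P (a : C) : bounded_near0 P (fun=> a).
Proof. by exists (normc a); exists 1. Qed.

Lemma bounded_near0_id P : bounded_near0 P id.
Proof. by exists 1; exists 1 => // x _ _ /ltW. Qed.

Lemma bounded_near0D P h1 h2 : bounded_near0 P h1 -> bounded_near0 P h2 ->
  bounded_near0 P (fun x => h1 x + h2 x).
Proof.
move=> [M1 [r1 r10 h1_le]] [M2 [r2 r20 h2_le]].
exists (M1 + M2); exists (Num.min r1 r2) => [|x Px x0]; first by rewrite lt_min r10.
rewrite lt_min => /andP[xr1 xr2].
by apply: le_trans (le_normcD _ _) _; rewrite lerD ?h1_le ?h2_le.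
Qed.

Lemma bounded_near0M P h1 h2 : bounded_near0 P h1 -> bounded_near0 P h2 ->
  bounded_near0 P (fun x => h1 x * h2 x).
Proof.
move=> [M1 [r1 r10 h1_le]] [M2 [r2 r20 h2_le]].
exists (M1 * M2); exists (Num.min r1 r2) => [|x Px x0]; first by rewrite lt_min r10.
rewrite lt_min => /andP[xr1 xr2].
by rewrite normcM ler_pM ?normc_ge0 ?h1_le ?h2_le.
Qed.

Lemma bounded_near0_eq0 P h (a : C) : clusters_at0 P -> bounded_near0 P h ->
  (forall x, P x -> x != 0 -> a = x * h x) -> a = 0.
Proof.
move=> clP [M [r r0 h_le]] a_eq; apply/eqP; rewrite -normc_eq0 eq_le normc_ge0 andbT.
apply/ler_addgt0Pr => e e0; rewrite add0r.
have M1 : 0 < `|M| + 1 by rewrite ltr_wpDl.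
have [|x [Px x0 xr]] := clP (Num.min r (e / (`|M| + 1))).
  by rewrite lt_min r0 divr_gt0.
move: xr; rewrite lt_min => /andP[xr xe].
rewrite (a_eq x Px x0) normcM.
have hx := le_trans (h_le x Px x0 xr) (ler_norm M).
apply: le_trans (ler_wpM2l (normc_ge0 x) hx) _.
apply: le_trans (ler_wpM2r (normr_ge0 M) (ltW xe)) _.
by rewrite mulrAC ler_pdivrMr // ler_pM2l // lerDl.
Qed.

Lemma laurent2_principal_eq0 P A B : clusters_at0 P ->
  bounded_near0 P (fun x => A / x ^+ 2 + B / x) -> A = 0 /\ B = 0.
Proof.
move=> clP bAB.
have A0 : A = 0.
  apply: (bounded_near0_eq0 clP
    (bounded_near0D (bounded_near0M (bounded_near0_id P) bAB) (bounded_near0_cst P (- B)))).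
  by move=> x _ x0 /=; field.
by split=> //; apply: (bounded_near0_eq0 clP bAB) => x _ x0; rewrite A0; field.
Qed.

Lemma laurent2_unique P f A B A' B' : clusters_at0 P ->
  laurent2 P f A B -> laurent2 P f A' B' -> A = A' /\ B = B'.
Proof.
move=> clP fAB fAB'.
suff [/subr0_eq <- /subr0_eq <-] : A' - A = 0 /\ B' - B = 0 by [].
apply: (laurent2_principal_eq0 clP).
apply: eq_bounded_near0 (bounded_near0D fAB
  (bounded_near0M (bounded_near0_cst P (-1)) fAB')) => x _ _ /=.
ring.
Qed.

Lemma eq_laurent2 P f g A B : (forall x, P x -> x != 0 -> f x = g x) ->
  laurent2 P f A B -> laurent2 P g A B.
Proof. by move=> fg; apply: eq_bounded_near0 => x Px x0; rewrite fg. Qed.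

Lemma laurent2_scale P f A B (c : C) : laurent2 P f A B ->
  laurent2 P (fun x => c * f x) (c * A) (c * B).
Proof.
move=> fAB; apply: eq_bounded_near0 (bounded_near0M (bounded_near0_cst P c) fAB).
by move=> x _ _ /=; ring.
Qed.

Lemma laurent2_mul P f g A B (l : C) :
  bounded_near0 P (fun x => (g x - 1 - l * x) / x ^+ 2) -> laurent2 P f A B ->
  laurent2 P (fun x => g x * f x) A (B + l * A).
Proof.
move=> gl fAB; pose id_bd := bounded_near0_id P; pose cst_bd := bounded_near0_cst P.
(* g = 1 + l x + x^2 h  and
   g f - A/x^2 - (B + l A)/x = g (f - A/x^2 - B/x) + h (A + B x) + l B,
   where h = (g - 1 - l x)/x^2. *)
have g_bd : bounded_near0 P g.
  apply: eq_bounded_near0 (bounded_near0D (bounded_near0D (cst_bd 1)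
    (bounded_near0M (cst_bd l) id_bd)) (bounded_near0M (bounded_near0M id_bd id_bd) gl)).
  by move=> x _ x0 /=; field.
apply: eq_bounded_near0 (bounded_near0D (bounded_near0D (bounded_near0M g_bd fAB)
  (bounded_near0M gl (bounded_near0D (cst_bd A) (bounded_near0M (cst_bd B) id_bd))))
  (cst_bd (l * B))).
by move=> x _ x0 /=; field.
Qed.

End laurent_expansion.

Section expansions.
Variable R : realType.
Local Notation C := R[i].

Lemma Cexp_quadratic_expansion (P : set C) (l q : C) :
  bounded_near0 P (fun x => (Cexp (l * x + q * x ^+ 2) - 1 - l * x) / x ^+ 2).
Proof.
pose L := normc l + normc q; have L0 : 0 <= L by rewrite addr_ge0 ?normc_ge0.
have exp_bd : bounded_near0 P
    (fun x => (Cexp (l * x + q * x ^+ 2) - 1 - (l * x + q * x ^+ 2)) / x ^+ 2).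
  exists (8 * L ^+ 2); exists (2 * (L + 1))^-1 => [|x _ x0]; first by rewrite invr_gt0; lra.
  move=> xr; have {xr}xr : 2 * (L + 1) * normc x < 1.
    by rewrite mulrC -ltr_pdivlMr ?div1r //; lra.
  set z := l * x + q * x ^+ 2.
  have x_le1 : normc x <= 1 by have := normc_ge0 x; nra.
  have z_le : normc z <= L * normc x.
    apply: le_trans (le_normcD _ _) _; rewrite (normcM l) (normcM q) normcX.
    have : normc x ^+ 2 <= normc x by rewrite expr2 ler_piMl ?normc_ge0.
    have := normc_ge0 l; have := normc_ge0 q; rewrite /L; nra.
  have z_half : normc z <= 1/2 by have := normc_ge0 x; nra.
  rewrite normcM normcV normcX ler_pdivrMr ?exprn_gt0 ?normc_gt0 //.
  apply: le_trans (normc_Cexp_sub_1D_le z_half) _.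
  have := normc_ge0 z; have := normc_ge0 x; nra.
apply: eq_bounded_near0 (bounded_near0D exp_bd (bounded_near0_cst P q)).
by move=> x _ x0 /=; field.
Qed.

Lemma twopii_neq0 : twopii R != 0.
Proof.
rewrite /twopii !mulf_neq0 // ?eq_complex /= ?oner_eq0 ?andbF //.
by rewrite eqxx andbT gt_eqF // pi_gt0.
Qed.

Lemma ee_quadratic_expansion (P : set C) (l q : C) :
  bounded_near0 P (fun x => (ee (l * x + q * x ^+ 2) - 1 - twopii R * l * x) / x ^+ 2).
Proof.
apply: eq_bounded_near0 (Cexp_quadratic_expansion P (twopii R * l) (twopii R * q)).
by move=> x _ _; rewrite /ee mulrDr !mulrA.
Qed.

Lemma residue_laurent2 (P : set C) (N m : nat) (psi : C -> C -> C)
    (E D : rat * rat -> C -> C) (s : rat * rat) (tau q : C) :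
  residue_data N m psi E D -> upper tau -> q != 0 ->
  laurent2 P (fun eps => ee (m%:R / N%:R * ratr s.1 * zs s tau) * psi tau (zs s tau + q * eps))
    (E s tau / (twopii R * q) ^+ 2)
    ((D s tau - 2 * (m%:R / N%:R) * ratr s.1 * E s tau) / (twopii R * q)).
Proof.
move=> res tau_upper q0; have [M [delta [delta0 res_le]]] := res s tau tau_upper.
exists (complex.Re M); exists (complex.Re delta / normc q) => [|x _ x0 xr].
  by rewrite divr_gt0 ?normc_gt0 //; move: delta0; rewrite ltcE => /andP[].
have qx_small : 0 < `|q * x| < delta.
  rewrite normr_gt0 mulf_neq0 //= normc_lt_Re // normcM mulrC -ltr_pdivlMr //.
  by rewrite normc_gt0.
rewrite -[_ / x ^+ 2]mulrA -invfM -exprMn -[_ / x]mulrA -invfM.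
rewrite -[twopii R * q * x]mulrA; exact: normc_le_Re (res_le _ qx_small).
Qed.

End expansions.

Section irrational_shifts.
Variable R : realType.
Local Notation C := R[i].

Lemma zs_add_real_rational (s s' : rat * rat) (tau : C) (t : R) : upper tau ->
  zs s tau + t%:C%C = zs s' tau -> rational t.
Proof.
have ratrC q : ratr q = (ratr q : R)%:C%C :> C by rewrite fmorph_rat.
rewrite /zs !ratrC; case: tau => x y; rewrite /upper /= => y0.
move/eqP; rewrite eq_complex /= => /andP[/eqP e_re /eqP e_im].
have a_eq : ratr s.1 = ratr s'.1 :> R by apply: (mulIf (lt0r_neq0 y0)); lra.
by exists (s'.2 - s.2) => //; rewrite rmorphB /=; rewrite a_eq in e_re; lra.
Qed.

Lemma irrational_pi_div (n : nat) : irrational (pi / n.+1%:R : R).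
Proof.
move=> [q _ qE]; apply: (@pi_irrationnal R); exists (q * n.+1%:R) => //.
by rewrite rmorphM /= qE ratr_nat mulfVK // pnatr_eq0.
Qed.

(* At these points u + j eps stays off every potential pole alpha' tau + beta',
   alpha' and beta' being rational. *)
Definition irrational_line (j : C) : set C :=
  [set eps | exists2 t : R, irrational t & j * eps = t%:C%C].

Lemma clusters_irrational_line (j : C) : j != 0 -> clusters_at0 (irrational_line j).
Proof.
move=> j0 r r0; have rj0 : 0 < r * normc j by rewrite mulr_gt0 ?normc_gt0.
set n := Num.bound (pi / (r * normc j)).
have := archi_boundP (ltW (divr_gt0 (pi_gt0 R) rj0)); rewrite -/n ltr_pdivrMr // => n_big.
have pin0 : pi / n.+1%:R != 0 :> R by rewrite mulf_neq0 ?invr_eq0 ?pnatr_eq0 ?gt_eqF ?pi_gt0.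
exists ((pi / n.+1%:R)%:C%C / j); split.
- by exists (pi / n.+1%:R); [exact: irrational_pi_div | rewrite mulrC mulfVK].
- by rewrite mulf_neq0 ?invr_eq0 // -(rmorph0 (real_complex R)) (inj_eq (@complexI R)).
rewrite normcM normcV normc_real ger0_norm ?divr_ge0 ?ltW ?pi_gt0 //.
rewrite ltr_pdivrMr ?normc_gt0 // ltr_pdivrMr // -natr1.
lra.
Qed.

End irrational_shifts.

Section mobius_action.
Variables (R : realType) (a b c d : int) (tau : R[i]).
Hypotheses (det : a * d - b * c = 1) (tau_upper : upper tau).
Local Notation C := R[i].
Local Notation j := (c%:~R * tau + d%:~R : C).
Local Notation w := (mobius a b c d tau).

Let intrC (z : int) : z%:~R = (z%:~R : R)%:C%C :> C.
Proof. by rewrite rmorph_int. Qed.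

Lemma mobius_denom_neq0 : j != 0.
Proof.
apply/eqP; rewrite !intrC; case: tau tau_upper => x y; rewrite /upper /= => y0.
move/eqP; rewrite eq_complex /= => /andP[/eqP j_re /eqP j_im].
have c0 : (c%:~R : R) = 0 by apply: (mulIf (lt0r_neq0 y0)); lra.
have d0 : (d%:~R : R) = 0 by rewrite c0 in j_re; lra.
move/eqP: c0; move/eqP: d0; rewrite !intr_eq0 => /eqP d0 /eqP c0.
by move: det; rewrite c0 d0 !mulr0 subrr.
Qed.

Lemma upper_mobius : upper w.
Proof.
rewrite /upper /mobius Im_div divr_gt0 ?exprn_gt0 ?normc_gt0 ?mobius_denom_neq0 //.
rewrite !intrC; case: tau tau_upper => x y; rewrite /upper /= => y0.
have det' : (a%:~R * d%:~R - b%:~R * c%:~R : R) = 1 by rewrite -!rmorphM -rmorphB det.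
have -> : (a%:~R * y + 0 * x + 0) * (c%:~R * x - 0 * y + d%:~R) -
    (a%:~R * x - 0 * y + b%:~R) * (c%:~R * y + 0 * x + 0) =
    (a%:~R * d%:~R - b%:~R * c%:~R : R) * y by ring.
by rewrite det' mul1r.
Qed.

Lemma zs_mobius (s : rat * rat) : zs s w * j = zs (sact s a b c d) tau.
Proof.
rewrite /zs /mobius /sact /= !rmorphD !rmorphM /= !ratr_int.
by field; rewrite mobius_denom_neq0.
Qed.

Lemma sact_fst_mobius_denom (s : rat * rat) :
  ratr (sact s a b c d).1 * j = ratr s.1 + c%:~R * zs (sact s a b c d) tau.
Proof.
have det' : (a%:~R * d%:~R - b%:~R * c%:~R : C) = 1 by rewrite -!rmorphM -rmorphB det.
transitivity (ratr s.1 * (a%:~R * d%:~R - b%:~R * c%:~R) + c%:~R * zs (sact s a b c d) tau).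
  by rewrite /zs /sact /= !rmorphD !rmorphM /= !ratr_int; ring.
by rewrite det' mulr1.
Qed.

Lemma not_pole_shift (S : set (rat * rat)) (s : rat * rat) (t : R) :
  irrational t -> ~ is_pole S tau (zs s tau + t%:C%C).
Proof. by move=> irr [s' _ e]; apply: irr (zs_add_real_rational tau_upper e). Qed.

Lemma not_pole_mobius_shift (S : set (rat * rat)) (s : rat * rat) (t : R) :
  irrational t -> ~ is_pole S w ((zs (sact s a b c d) tau + t%:C%C) / j).
Proof.
move=> irr [s' _ e]; apply: irr (zs_add_real_rational (s' := sact s' a b c d) tau_upper _).
by rewrite -(zs_mobius s') -e mulfVK ?mobius_denom_neq0.
Qed.

Variables (N m : nat).
Local Notation K := (m%:R / N%:R : C).

Lemma jacobi_near_pole (G : congr_group) (k : int) (S : set (rat * rat))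
    (psi : C -> C -> C) (s : rat * rat) (eps : C) (t : R) :
  jacobi_form G N k m S psi -> in_Gamma G N a b c d -> irrational t -> j * eps = t%:C%C ->
  ee (K * ratr s.1 * zs s w) * psi w (zs s w + eps) =
  j ^ k * (ee (2 * K * c%:~R * zs (sact s a b c d) tau * eps + K * c%:~R * j * eps ^+ 2) *
    (ee (K * ratr (sact s a b c d).1 * zs (sact s a b c d) tau) *
     psi tau (zs (sact s a b c d) tau + j * eps))).
Proof.
move=> [jac _] inG irr jeps; have j0 := mobius_denom_neq0.
have zsw : zs s w = zs (sact s a b c d) tau / j by rewrite -zs_mobius mulfK.
have alpha : ratr s.1 = ratr (sact s a b c d).1 * j - c%:~R * zs (sact s a b c d) tau.
  by rewrite sact_fst_mobius_denom addrK.
set u := zs (sact s a b c d) tau in zsw alpha *.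
have np : ~ is_pole S tau (u + j * eps) by rewrite jeps; exact: not_pole_shift.
have np_w : ~ is_pole S w ((u + j * eps) / j) by rewrite jeps; exact: not_pole_mobius_shift.
have -> : zs s w + eps = (u + j * eps) / j by rewrite zsw; field.
have expo : K * ratr s.1 * zs s w + K * (c%:~R * (u + j * eps) ^+ 2 / j) =
    2 * K * c%:~R * u * eps + K * c%:~R * j * eps ^+ 2 + K * ratr (sact s a b c d).1 * u.
  (* K is generalized so that field does not ask for N != 0. *)
  by rewrite zsw alpha; move: (m%:R / N%:R : C) => K; field.
rewrite (jac a b c d inG tau _ tau_upper np np_w).
by rewrite [in RHS]mulrA -eeD -expo eeD; ring.
Qed.

End mobius_action.

Theorem proposition4p6 (R : realType) (N : nat) (k : int) (m : nat)
  (G : congr_group) (S : set (rat * rat)) (psi : R[i] -> R[i] -> R[i])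
  (E D : rat * rat -> R[i] -> R[i]) :
  (0 < N)%N -> (0 < m)%N ->
  holo_off_poles S psi ->
  jacobi_form G N k m S psi ->
  residue_data N m psi E D ->
  forall s : rat * rat, S s ->
  forall a b c d : int, in_Gamma G N a b c d ->
  forall tau : R[i], upper tau ->
    E s (mobius a b c d tau) = (c%:~R * tau + d%:~R) ^ (k - 2) * E (sact s a b c d) tau /\
    D s (mobius a b c d tau) = (c%:~R * tau + d%:~R) ^ (k - 1) * D (sact s a b c d) tau.
Proof.
move=> _ _ _ jac res s _ a b c d inG tau tau_upper; have [det _] := inG.
have j0 := mobius_denom_neq0 det tau_upper; have T0 := twopii_neq0 R.
set j := c%:~R * tau + d%:~R in j0 *; pose K : R[i] := m%:R / N%:R.
set w := mobius a b c d tau; set s' := sact s a b c d; set u := zs s' tau.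
pose P := irrational_line j.
have lhs := residue_laurent2 P s res (upper_mobius det tau_upper) (oner_neq0 _).
have rhs := laurent2_scale (j ^ k) (laurent2_mul
  (ee_quadratic_expansion P (2 * K * c%:~R * u) (K * c%:~R * j))
  (residue_laurent2 P s' res tau_upper j0)).
have [|eE eD] := laurent2_unique (clusters_irrational_line j0) lhs (eq_laurent2 _ rhs).
  by move=> eps [t irr jeps] _; rewrite mul1r (jacobi_near_pole det tau_upper s jac inG irr jeps).
have jk : j ^ k = j ^ (k - 2) * j ^+ 2 by rewrite -[j ^+ 2]/(j ^ 2%:Z) -expfzDr // subrK.
have jk1 : j ^ (k - 1) = j ^ (k - 2) * j by rewrite -[j in RHS]expr1z -expfzDr // -addrA.
have alpha : ratr s.1 = ratr s'.1 * j - c%:~R * u.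
  by rewrite (sact_fst_mobius_denom tau det) addrK.
have T1_0 : twopii R * 1 != 0 by rewrite mulr1.
have eE' : E s w = j ^ (k - 2) * E s' tau.
  by rewrite -[E s w](mulfVK (expf_neq0 2 T1_0)) eE jk; field; rewrite j0 T0.
split=> //; rewrite -[D s w](subrK (2 * K * ratr s.1 * E s w)).
rewrite -[_ - _](mulfVK T1_0) eD jk jk1 eE' alpha /K.
by move: (m%:R / N%:R : R[i]) => K'; field; rewrite j0 T0.
Qed.
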